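(* Let $\mathcal{H}$ be any undirected hypergraph on the vertex set $\{1,2,3\}$, and consider any network dynamical system on $\mathcal{H}$ with one-dimensional node states, smooth intrinsic dynamics $F$ and smooth, edge-dependent coupling functions $G_e$ (each invariant under permutations of its tail arguments). Then the resulting vector field on $\mathbb{R}^3$ is not equal to the Guckenheimer--Holmes vector field $$\dot x_1 = x_1 + a x_1^3 + b x_1x_2^2 + c x_1x_3^2,\quad \dot x_2 = x_2 + a x_2^3 + b x_2x_3^2 + c x_1^2x_2,\quad \dot x_3 = x_3 + a x_3^3 + b x_1^2x_3 + c x_2^2x_3$$ for any real parameters $a,b,c$ with $b\neq c$. In particular, the Guckenheimer--Holmes system cannot be realized for any parameters satisfying $a+b+c=-1$, $-\tfrac13<a<0$, $c<a<b<0$.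
   Context: A directed hypergraph on $\mathcal{V}=\{1,\dots,N\}$ is a set $\mathcal{E}$ of hyperedges $e=(T(e),H(e))$ with nonempty tail $T(e)\subseteq\mathcal{V}$ and head $H(e)\subseteq\mathcal{V}$. It is undirected if every hyperedge has the form $e=(A,A)$, $A\subseteq\mathcal V$ nonempty. A network dynamical system on $\mathcal{H}$ with one-dimensional node states is the ODE on $\mathbb{R}^N$ $$\dot x_k = F(x_k) + \sum_{e\in\mathcal{E}:\,k\in H(e)} G_e(x_k; x_{T(e)}),\qquad k=1,\dots,N,$$ where $F:\mathbb{R}\to\mathbb{R}$ is smooth, each $G_e:\mathbb{R}\times\mathbb{R}^{|T(e)|}\to\mathbb{R}$ is smooth, invariant under permutations of its last $|T(e)|$ arguments, and depends nontrivially on them; $x_{T(e)}$ denotes the vector of the $x_j$, $j\in T(e)$. (For an undirected edge $A$, node $k\in A$ thus receives $G_A(x_k;x_A)$, where $x_A$ includes $x_k$.) ''Realizing'' a vector field means that the network vector field equals it identically. *)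

From mathcomp Require Import all_boot all_order all_fingroup all_algebra.
From mathcomp Require Import all_classical all_reals all_analysis.
Import numFieldNormedType.Exports.
Set Implicit Arguments. Unset Strict Implicit. Unset Printing Implicit Defensive.
Import Order.TTheory GRing.Theory Num.Theory.
Local Open Scope ring_scope.

Definition iter_dir {R : realType} {V : normedModType R}
  (vs : seq V) (f : V -> R) : V -> R :=
  foldr (fun v g => 'D_v g) f vs.

Definition smooth {R : realType} {V : normedModType R} (f : V -> R) : Prop :=
  forall vs : seq V,
    continuous (iter_dir vs f) /\ (forall x v, derivable (iter_dir vs f) x v).

(* Vertex set {1,2,3} is modelled as 'I_3 = {0,1,2}.
   An undirected hypergraph is a set E of nonempty subsets A of 'I_3;
   the hyperedge A stands for (A, A). *)
Definition undirected_hypergraph (E : {set {set 'I_3}}) : Prop :=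
  forall A, A \in E -> A != finset.set0.

(* Coupling function of an edge A: G A : R x R^{|A|} -> R, the tail vector
   x_A being listed in increasing vertex order. *)
Definition coupling_family (R : realType) :=
  forall A : {set 'I_3}, (R * 'rV[R]_#|A|)%type -> R.

Definition admissible_coupling (R : realType) (n : nat)
  (g : (R * 'rV[R]_n)%type -> R) : Prop :=
  [/\ smooth g,
      (forall (s : 'S_n) (y : R) (w : 'rV[R]_n), g (y, col_perm s w) = g (y, w))
    & exists (y : R) (w w' : 'rV[R]_n), g (y, w) != g (y, w')].

Definition tail_vec (R : realType) (A : {set 'I_3}) (x : 'I_3 -> R) : 'rV[R]_#|A| :=
  \row_(i < #|A|) x (enum_val i).

Definition network_field (R : realType) (E : {set {set 'I_3}})
  (F : R -> R) (G : coupling_family R) (x : 'I_3 -> R) (k : 'I_3) : R :=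
  F (x k) + \sum_(A in E | k \in A) G A (x k, tail_vec A x).

(* The Guckenheimer--Holmes vector field (x_1,x_2,x_3 = x 0, x 1, x 2). *)
Definition gh_field (R : realType) (a b c : R) (x : 'I_3 -> R) (k : 'I_3) : R :=
  let x1 := x ord0 in let x2 := x (lift ord0 ord0) in let x3 := x ord_max in
  match val k with
  | 0%N => x1 + a * x1 ^+ 3 + b * x1 * x2 ^+ 2 + c * x1 * x3 ^+ 2
  | 1%N => x2 + a * x2 ^+ 3 + b * x2 * x3 ^+ 2 + c * x1 ^+ 2 * x2
  | _   => x3 + a * x3 ^+ 3 + b * x1 ^+ 2 * x3 + c * x2 ^+ 2 * x3
  end.

Definition realizes (R : realType) (E : {set {set 'I_3}}) (F : R -> R)
  (G : coupling_family R) (V : ('I_3 -> R) -> 'I_3 -> R) : Prop :=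
  forall x k, network_field E F G x k = V x k.

From mathcomp Require Import all_boot all_order all_fingroup all_algebra.
From mathcomp Require Import all_classical all_reals all_analysis.
Import numFieldNormedType.Exports.
Import Order.TTheory GRing.Theory Num.Theory.
From mathcomp Require Import ring lra.
Local Open Scope ring_scope.
Set Implicit Arguments. Unset Strict Implicit.

(* Consider the cyclic defect
     sum_k ( V(1_{k-1}) k - V(1_{k+1}) k )   (indices mod 3),
   where 1_m is the point with all coordinates 1 except x_m = 0.  It equals
   3(b - c) for the Guckenheimer--Holmes field.  For a network field it is a
   sum of contributions of single edges A.  Among the three vertices, two,
   i and j, lie on the same side of A, so the transposition (i j) preserves
   A and the contribution of A is equivariant under it; but conjugating the
   cyclic shift k -> k+1 by a transposition reverses it, so the contribution
   of A equals its own opposite and vanishes. *)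

Lemma tail_vec_perm (R : realType) (A : {set 'I_3}) (s : 'S_3) (x : 'I_3 -> R) :
  (forall i, (s i \in A) = (i \in A)) ->
  exists p : 'S_#|A|, tail_vec A (x \o s) = col_perm p (tail_vec A x).
Proof.
move=> sA; have [A0 | [a aA]] := set_0Vmem A.
  exists 1%g; apply/matrixP => i j; exfalso.
  by have := enum_valP j; move: (enum_val j) => z; rewrite A0 inE.
have p_inj : injective (fun i : 'I_#|A| => enum_rank_in aA (s (enum_val i))).
  move=> i j /enum_rank_in_inj; rewrite !sA !enum_valP => /(_ isT isT).
  by move/perm_inj/enum_val_inj.
exists (perm p_inj); apply/matrixP => i j.
by rewrite /tail_vec !mxE permE /= enum_rankK_in ?sA ?enum_valP.
Qed.

Definition edge_field (R : realType) (G : coupling_family R) (A : {set 'I_3})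
    (x : 'I_3 -> R) (k : 'I_3) : R :=
  if k \in A then G A (x k, tail_vec A x) else 0.

Lemma network_fieldE (R : realType) (E : {set {set 'I_3}}) (F : R -> R)
    (G : coupling_family R) (x : 'I_3 -> R) (k : 'I_3) :
  network_field E F G x k = F (x k) + \sum_(A in E) edge_field G A x k.
Proof. by rewrite /network_field big_mkcondr. Qed.

Lemma edge_field_perm (R : realType) (G : coupling_family R) (A : {set 'I_3})
    (s : 'S_3) (x : 'I_3 -> R) (k : 'I_3) :
  (forall (p : 'S_#|A|) y w, G A (y, col_perm p w) = G A (y, w)) ->
  (forall i, (s i \in A) = (i \in A)) ->
  edge_field G A (x \o s) k = edge_field G A x (s k).
Proof.
move=> G_sym sA; have [p tail_s] := tail_vec_perm x sA.
by rewrite /edge_field tail_s G_sym sA.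
Qed.

Definition ones_but (R : realType) (m : 'I_3) : 'I_3 -> R :=
  fun i => (i != m)%:R.

Definition cyclic_defect (R : realType) (V : ('I_3 -> R) -> 'I_3 -> R) : R :=
  \sum_k (V (ones_but R (ord_pred k)) k - V (ones_but R (ordS k)) k).

Lemma ones_but_perm (R : realType) (s : 'S_3) (m : 'I_3) :
  ones_but R m \o s = ones_but R (s^-1 m)%g.
Proof.
by apply/funext => i; rewrite /ones_but /= -(inj_eq (@perm_inj _ s^-1)) permK.
Qed.

Lemma tperm_conj_ord_pred (i j k : 'I_3) :
  i != j -> tperm i j (ord_pred (tperm i j k)) = ordS k.
Proof.
move=> ij; apply: val_inj; move: i j k ij.
by do 3![case=> -[|[|[|//]]] ?] => ?; rewrite !permE.
Qed.

Lemma tperm_conj_ordS (i j k : 'I_3) :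
  i != j -> tperm i j (ordS (tperm i j k)) = ord_pred k.
Proof.
move=> ij; apply: val_inj; move: i j k ij.
by do 3![case=> -[|[|[|//]]] ?] => ?; rewrite !permE.
Qed.

Lemma exists_tperm_stab (A : {set 'I_3}) :
  exists i j : 'I_3, i != j /\ (i \in A) = (j \in A).
Proof.
have [lt03 lt13 lt23] : [/\ (0 < 3)%N, (1 < 3)%N & (2 < 3)%N] by [].
case A0: (Ordinal lt03 \in A); case A1: (Ordinal lt13 \in A);
  case A2: (Ordinal lt23 \in A).
all: first [ by exists (Ordinal lt03), (Ordinal lt13); rewrite A0 A1
           | by exists (Ordinal lt03), (Ordinal lt23); rewrite A0 A2
           | by exists (Ordinal lt13), (Ordinal lt23); rewrite A1 A2 ].
Qed.

Lemma edge_field_defect (R : realType) (G : coupling_family R) (A : {set 'I_3}) :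
  (forall (p : 'S_#|A|) y w, G A (y, col_perm p w) = G A (y, w)) ->
  cyclic_defect (edge_field G A) = 0.
Proof.
move=> G_sym; have [i [j [ij Aij]]] := exists_tperm_stab A.
set t := tperm i j.
have tA k : (t k \in A) = (k \in A) by rewrite /t; case: tpermP => // ->.
have t_inv : (t^-1 = t)%g by rewrite /t tpermV.
suff: cyclic_defect (edge_field G A) = - cyclic_defect (edge_field G A) by lra.
rewrite {1}/cyclic_defect (reindex_inj (@perm_inj _ t)) -sumrN.
apply: eq_bigr => k _; rewrite opprB.
rewrite -!(edge_field_perm _ _ G_sym tA) !ones_but_perm t_inv.
by rewrite tperm_conj_ord_pred // tperm_conj_ordS.
Qed.

Lemma gh_field_defect (R : realType) (a b c : R) :
  cyclic_defect (gh_field a b c) = (b - c) *+ 3.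
Proof.
by rewrite /cyclic_defect !big_ord_recr big_ord0 /= /gh_field /ones_but /=; ring.
Qed.

Lemma network_field_defect (R : realType) (E : {set {set 'I_3}}) (F : R -> R)
    (G : coupling_family R) :
  cyclic_defect (network_field E F G) =
  \sum_(A in E) cyclic_defect (edge_field G A).
Proof.
rewrite /cyclic_defect exchange_big /=; apply: eq_bigr => k _.
have [neq_pred neq_S] : k != ord_pred k /\ k != ordS k.
  by case: k => -[|[|[|//]]].
rewrite !network_fieldE {1 3}/ones_but neq_pred neq_S.
by rewrite opprD addrACA subrr add0r sumrB.
Qed.

Lemma gh_field_not_network (R : realType) (a b c : R) (E : {set {set 'I_3}})
    (F : R -> R) (G : coupling_family R) :
  b != c ->
  (forall A, A \in E -> forall (p : 'S_#|A|) y w, G A (y, col_perm p w) = G A (y, w)) ->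
  ~ realizes E F G (gh_field a b c).
Proof.
move=> bc G_sym realizes_gh.
have network_gh : network_field E F G = gh_field a b c.
  by apply/funext => x; apply/funext => k; apply: realizes_gh.
have : (b - c) *+ 3 = 0.
  rewrite -(gh_field_defect a) -network_gh network_field_defect.
  by apply: big1 => A /G_sym; apply: edge_field_defect.
by move/eqP; rewrite -mulr_natr mulf_eq0 subr_eq0 (negbTE bc) pnatr_eq0.
Qed.

Theorem mainTheorem1 (R : realType) :
  (forall (a b c : R), b != c ->
     forall (E : {set {set 'I_3}}) (F : R -> R) (G : coupling_family R),
       undirected_hypergraph E -> smooth F ->
       (forall A, A \in E -> admissible_coupling (G A)) ->
       ~ realizes E F G (gh_field a b c))
  /\
  (forall (a b c : R), a + b + c = -1 -> - 3^-1 < a < 0 -> c < a -> a < b -> b < 0 ->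
     forall (E : {set {set 'I_3}}) (F : R -> R) (G : coupling_family R),
       undirected_hypergraph E -> smooth F ->
       (forall A, A \in E -> admissible_coupling (G A)) ->
       ~ realizes E F G (gh_field a b c)).
Proof.
have not_realizable (a b c : R) (E : {set {set 'I_3}}) F (G : coupling_family R) :
    b != c ->
    (forall A, A \in E -> admissible_coupling (G A)) ->
    ~ realizes E F G (gh_field a b c).
  by move=> bc adm; apply: gh_field_not_network bc _ => A /adm [].
split=> [a b c bc E F G _ _ | a b c _ _ ca ab _ E F G _ _].
  exact: not_realizable.
by apply: not_realizable; rewrite gt_eqF // (lt_trans ca ab).
Qed.
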